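(* Let $\varepsilon>0$ and $x_0$ satisfy $0\le x_0<\tfrac14$ and $\dfrac{\varepsilon^2}{\frac14-\varepsilon^2x_0}<1$. Define $\mathcal{C}:\mathbb{T}^1\to\mathbb{C}$ by $\mathcal{C}(\theta)=\tfrac14-\varepsilon^2x_0-\varepsilon^2e^{2\pi i\theta}$ and $\tilde\gamma:\mathbb{T}^1\to\mathbb{C}$ by $$\tilde\gamma(\theta)=\tfrac12+\varepsilon e^{2\pi i\theta}\sqrt{1+x_0e^{-4\pi i\theta}}$$ (principal branch of the square root). Let $\Gamma=\{(\langle 2\theta\rangle,\tilde\gamma(\theta)):\theta\in\mathbb{T}^1\}$. Then $\Gamma$ is an invariant $2$-curve for the static fibred quadratic polynomial $Q(\theta,z)=(\theta,\ z^2+\mathcal{C}(\theta))$; that is, $\tilde\gamma(\theta)^2+\mathcal{C}(\langle2\theta\rangle)=\tilde\gamma(\theta)$ for every $\theta\in\mathbb{T}^1$.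
   Context: $\mathbb{T}^1=\mathbb{R}/\mathbb{Z}$ and $\langle x\rangle$ denotes the fractional part. A $2$-curve is a set of the form $\{(\langle 2\theta\rangle,\tilde\gamma(\theta)):\theta\in\mathbb{T}^1\}$ with $\tilde\gamma:\mathbb{T}^1\to\mathbb{C}$ continuous and injective. For a fibred map $F(\theta,z)=(\theta+\alpha,f_\theta(z))$ (here $\alpha=0$, ''static''), a $2$-curve is invariant if for some $\tau\in\{0,1\}$, $f_{\langle2\theta\rangle}(\tilde\gamma(\theta))=\tilde\gamma(\theta+\tfrac{\alpha+\tau}{2})$ for all $\theta$; here this is the case $\tau=0$. *)

From Stdlib Require Import Reals Lra.
From Coquelicot Require Import Coquelicot.
Open Scope R_scope.

Definition cis (t : R) : C := (cos t, sin t).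

(* principal branch of the complex square root:
   real part >= 0, and imaginary part >= 0 on the cut (negative reals). *)
Definition Csqrt (z : C) : C :=
  let r := Cmod z in
  (sqrt ((r + Re z) / 2),
   if Rlt_dec (Im z) 0 then - sqrt ((r - Re z) / 2) else sqrt ((r - Re z) / 2)).

Definition frac (x : R) : R := frac_part x.

(* Functions on T^1 = R/Z are represented as 1-periodic functions on R. *)
Definition T1_fun {A : Type} (g : R -> A) : Prop := forall t, g (t + 1) = g t.

(* gamma~ : T^1 -> C continuous and injective (its graph-lift
   {(<2 theta>, gamma~ theta)} is then a 2-curve). *)
Definition two_curve (g : R -> C) : Prop :=
  T1_fun g /\
  (forall t, continuous g t) /\
  (forall s t, 0 <= s < 1 -> 0 <= t < 1 -> g s = g t -> s = t).

(* invariance of the 2-curve of gamma~ under F(theta,z) = (theta+alpha, f theta z),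
   for the given tau in {0,1}. *)
Definition invariant_2curve (alpha : R) (tau : nat) (f : R -> C -> C) (g : R -> C) : Prop :=
  two_curve g /\ (tau = 0%nat \/ tau = 1%nat) /\
  forall theta, f (frac (2 * theta)) (g theta) = g (theta + (alpha + INR tau) / 2).

Definition Ccurve (eps x0 : R) (theta : R) : C :=
  (RtoC (1/4 - eps^2 * x0) - RtoC (eps^2) * cis (2 * PI * theta))%C.

Definition gamma_t (eps x0 : R) (theta : R) : C :=
  (RtoC (1/2) + RtoC eps * cis (2 * PI * theta)
     * Csqrt (RtoC 1 + RtoC x0 * cis (- (4 * PI * theta))))%C.

(* static fibred quadratic polynomial  Q(theta,z) = (theta, z^2 + C(theta)) *)
Definition Qfib (eps x0 : R) (theta : R) (z : C) : C :=
  (z * z + Ccurve eps x0 theta)%C.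

From Stdlib Require Import Reals Lia Psatz.
From Coquelicot Require Import Coquelicot.
Open Scope R_scope.

(* With [w = e^{2 pi i theta}] the principal root squares back, so
   [(gamma~ - 1/2)^2 = eps^2 w^2 (1 + x0 w^-2) = eps^2 (w^2 + x0)], and completing the square
   turns this into [gamma~^2 + C(2 theta) = gamma~].  Since [|x0| < 1] the radicand stays in the
   right half-plane, where the principal root is continuous and nonzero.  For injectivity,
   squaring [gamma~ s = gamma~ t] gives [w_s^2 = w_t^2], hence equal radicands, and cancelling
   the common nonzero root leaves [w_s = w_t]. *)

Lemma cis_add (a b : R) : cis (a + b) = (cis a * cis b)%C.
Proof. unfold cis, Cmult; simpl; rewrite cos_plus, sin_plus; f_equal; ring. Qed.

Lemma cis_0 : cis 0 = 1%C.
Proof. unfold cis; rewrite cos_0, sin_0; reflexivity. Qed.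

Lemma cis_opp_mul (a : R) : (cis (- a) * cis a)%C = 1%C.
Proof. rewrite <- cis_add, Rplus_opp_l; exact cis_0. Qed.

Lemma cis_opp (a : R) : cis (- a) = Cconj (cis a).
Proof. unfold cis, Cconj; simpl; now rewrite cos_neg, sin_neg. Qed.

Lemma cis_2PI_IZR (k : Z) : cis (2 * PI * IZR k) = 1%C.
Proof.
  assert (Hsin : sin (IZR k * PI) = 0) by (apply sin_eq_0_1; now exists k).
  unfold cis; replace (2 * PI * IZR k) with (2 * (IZR k * PI)) by ring.
  rewrite cos_2a_sin, sin_2a, Hsin; unfold RtoC; f_equal; ring.
Qed.

Lemma cis_add_2PI_IZR (a : R) (k : Z) : cis (a + 2 * PI * IZR k) = cis a.
Proof. rewrite cis_add, cis_2PI_IZR; apply Cmult_1_r. Qed.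

Lemma cis_2PI_frac (x : R) : cis (2 * PI * frac x) = cis (2 * PI * x).
Proof.
  unfold frac, frac_part.
  replace (2 * PI * (x - IZR (Int_part x))) with (2 * PI * x + 2 * PI * IZR (- Int_part x))
    by (rewrite opp_IZR; ring).
  apply cis_add_2PI_IZR.
Qed.

Lemma cis_2PI_inj (s t : R) :
  0 <= s < 1 -> 0 <= t < 1 -> cis (2 * PI * s) = cis (2 * PI * t) -> s = t.
Proof.
  intros Hs Ht Hst.
  assert (Hdiff : cis (2 * PI * (s - t)) = 1%C).
  { replace (2 * PI * (s - t)) with (- (2 * PI * t) + 2 * PI * s) by ring.
    rewrite cis_add, Hst; apply cis_opp_mul. }
  unfold cis in Hdiff; injection Hdiff as Hcos Hsin.
  destruct (sin_eq_0_0 _ Hsin) as [k Hk].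
  pose proof PI_RGT_0.
  assert (Hk2 : IZR k = 2 * (s - t)).
  { apply (Rmult_eq_reg_r PI); [rewrite <- Hk; ring | lra]. }
  assert (Hlo : (-2 < k)%Z) by (apply lt_IZR; lra).
  assert (Hhi : (k < 2)%Z) by (apply lt_IZR; lra).
  rewrite Hk in Hcos.
  assert (k = -1 \/ k = 0 \/ k = 1)%Z as [-> | [-> | ->]] by lia.
  - replace (IZR (-1) * PI) with (- PI) in Hcos by (simpl; ring).
    rewrite cos_neg, cos_PI in Hcos; lra.
  - simpl in Hk2; lra.
  - rewrite Rmult_1_l, cos_PI in Hcos; lra.
Qed.

Lemma Csqrt_sqr (z : C) : (Csqrt z * Csqrt z)%C = z.
Proof.
  destruct z as [x y]; unfold Csqrt; simpl.
  set (r := Cmod (x, y)).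
  assert (Hr0 : 0 <= r) by apply Cmod_ge_0.
  assert (Hr2 : r * r = x * x + y * y).
  { unfold r, Cmod; simpl; rewrite sqrt_sqrt; nra. }
  assert (Hx : - r <= x <= r) by (split; nra).
  set (a := sqrt ((r + x) / 2)); set (b := sqrt ((r - x) / 2)).
  assert (Ha : a * a = (r + x) / 2) by (apply sqrt_sqrt; lra).
  assert (Hb : b * b = (r - x) / 2) by (apply sqrt_sqrt; lra).
  assert (Hab : a * b = Rabs (y / 2)).
  { unfold a, b; rewrite <- sqrt_mult, <- sqrt_Rsqr_abs by lra.
    f_equal; unfold Rsqr; nra. }
  unfold Cmult; simpl; destruct (Rlt_dec y 0).
  - rewrite Rabs_left in Hab by lra; f_equal; nra.
  - rewrite Rabs_right in Hab by lra; f_equal; nra.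
Qed.

Lemma Re_Csqrt_pos (z : C) : 0 < Re z -> 0 < Re (Csqrt z).
Proof.
  intros Hz; apply sqrt_lt_R0; pose proof (Cmod_ge_0 z); unfold Re in *; lra.
Qed.

Lemma Csqrt_right_half_plane (z : C) :
  0 < Re z -> Csqrt z = (Re (Csqrt z), Im z / (2 * Re (Csqrt z))).
Proof.
  intros Hz; pose proof (Re_Csqrt_pos z Hz) as Ha.
  pose proof (f_equal Im (Csqrt_sqr z)) as Him.
  destruct (Csqrt z) as [a b]; simpl in *.
  rewrite <- Him; f_equal; field; lra.
Qed.

Section ContinuousComplex.

Variable t : R.

Lemma continuous_C_pair (f g : R -> R) :
  continuous f t -> continuous g t -> continuous (fun u => (f u, g u) : C) t.
Proof.
  intros Hf Hg.
  apply (continuous_comp_2 (X := C_UniformSpace) f g pair t Hf Hg).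
  apply filterlim_ext with (f := fun p => p); [now intros [] | apply filterlim_id].
Qed.

Lemma continuous_Re_comp (f : R -> C) : continuous f t -> continuous (fun u => Re (f u)) t.
Proof. intros Hf; apply (continuous_comp f fst t Hf); destruct (f t); apply continuous_fst. Qed.

Lemma continuous_Im_comp (f : R -> C) : continuous f t -> continuous (fun u => Im (f u)) t.
Proof. intros Hf; apply (continuous_comp f snd t Hf); destruct (f t); apply continuous_snd. Qed.

Lemma continuous_Rplus_comp (f g : R -> R) :
  continuous f t -> continuous g t -> continuous (fun u => f u + g u) t.
Proof. apply (continuous_plus (V := R_NormedModule)). Qed.

Lemma continuous_Rmult_comp (f g : R -> R) :
  continuous f t -> continuous g t -> continuous (fun u => f u * g u) t.
Proof. apply (continuous_mult (K := R_AbsRing)). Qed.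

Lemma continuous_Cplus_comp (f g : R -> C) :
  continuous f t -> continuous g t -> continuous (fun u => (f u + g u)%C) t.
Proof. apply (continuous_plus (V := C_NormedModule)). Qed.

Lemma continuous_Cmult_comp (f g : R -> C) :
  continuous f t -> continuous g t -> continuous (fun u => (f u * g u)%C) t.
Proof.
  intros Hf Hg.
  pose proof (continuous_Re_comp f Hf); pose proof (continuous_Im_comp f Hf).
  pose proof (continuous_Re_comp g Hg); pose proof (continuous_Im_comp g Hg).
  apply continuous_C_pair.
  - apply (continuous_plus (V := R_NormedModule)).
    + now apply continuous_Rmult_comp.
    + apply (continuous_opp (V := R_NormedModule)). now apply continuous_Rmult_comp.
  - now apply continuous_Rplus_comp; apply continuous_Rmult_comp.
Qed.

Lemma continuous_cis_comp (f : R -> R) : continuous f t -> continuous (fun u => cis (f u)) t.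
Proof.
  intros Hf.
  now apply continuous_C_pair; [apply continuous_cos_comp | apply continuous_sin_comp].
Qed.

Lemma continuous_Csqrt_comp (f : R -> C) :
  (forall u, 0 < Re (f u)) -> continuous f t -> continuous (fun u => Csqrt (f u)) t.
Proof.
  intros Hpos Hf.
  pose proof (continuous_Re_comp f Hf) as HRe; pose proof (continuous_Im_comp f Hf) as HIm.
  assert (Hsqrt : continuous (fun u => Re (Csqrt (f u))) t).
  { apply continuous_sqrt_comp, continuous_Rmult_comp; [ | apply continuous_const].
    apply continuous_Rplus_comp; [ | exact HRe].
    apply continuous_sqrt_comp, continuous_Rplus_comp; apply continuous_Rmult_comp;
      try apply continuous_Rmult_comp; auto using continuous_const. }
  apply continuous_ext
    with (f := fun u => (Re (Csqrt (f u)), Im (f u) / (2 * Re (Csqrt (f u)))) : C).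
  { intros u; symmetry; apply Csqrt_right_half_plane, Hpos. }
  apply continuous_C_pair; [exact Hsqrt | ].
  apply continuous_Rmult_comp; [exact HIm | ].
  apply continuous_Rinv_comp.
  - apply continuous_Rmult_comp; [apply continuous_const | exact Hsqrt].
  - pose proof (Re_Csqrt_pos _ (Hpos t)); lra.
Qed.

End ContinuousComplex.

Lemma Cmult_reg_l (c a b : C) : c <> 0%C -> (c * a = c * b)%C -> a = b.
Proof.
  intros Hc Hab.
  rewrite <- (Cmult_1_l a), <- (Cmult_1_l b), <- (Cinv_l c Hc), <- !Cmult_assoc, Hab.
  reflexivity.
Qed.

Lemma Re_1_plus_scal_cis_pos (x0 a : R) : Rabs x0 < 1 -> 0 < Re (1 + x0 * cis a)%C.
Proof.
  intros Hx0; simpl; pose proof (COS_bound a); destruct (Rabs_def2 _ _ Hx0).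
  destruct (Rle_lt_dec 0 x0); nra.
Qed.

Section GammaCurve.

Variables eps x0 : R.

Lemma gamma_t_periodic (t : R) : gamma_t eps x0 (t + 1) = gamma_t eps x0 t.
Proof.
  unfold gamma_t.
  replace (2 * PI * (t + 1)) with (2 * PI * t + 2 * PI * IZR 1) by (simpl; ring).
  replace (- (4 * PI * (t + 1))) with (- (4 * PI * t) + 2 * PI * IZR (-2)) by (simpl; ring).
  now rewrite !cis_add_2PI_IZR.
Qed.

Lemma gamma_t_centered_sqr (t : R) :
  let g := (gamma_t eps x0 t - RtoC (1/2))%C in
  (g * g = RtoC (eps ^ 2) * (cis (2 * PI * (2 * t)) + RtoC x0))%C.
Proof.
  intros g.
  assert (Hrot : (cis (2 * PI * t) * cis (2 * PI * t) * cis (- (4 * PI * t)) = 1)%C).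
  { rewrite <- cis_add, <- cis_add; replace (_ + _ + _) with 0 by ring; exact cis_0. }
  assert (Hdouble : cis (2 * PI * (2 * t)) = (cis (2 * PI * t) * cis (2 * PI * t))%C).
  { rewrite <- cis_add; f_equal; ring. }
  unfold g, gamma_t; rewrite Hdouble.
  set (w := cis (2 * PI * t)); set (v := cis (- (4 * PI * t))); fold w in Hrot; fold v in Hrot.
  transitivity (RtoC eps * RtoC eps * (w * w)
                * (Csqrt (1 + RtoC x0 * v) * Csqrt (1 + RtoC x0 * v)))%C; [ring | ].
  rewrite Csqrt_sqr, RtoC_pow.
  transitivity (RtoC eps ^ 2 * (w * w + RtoC x0 * (w * w * v)))%C; [ring | ].
  now rewrite Hrot, Cmult_1_r.
Qed.

Lemma Qfib_gamma_t (t : R) :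
  Qfib eps x0 (frac (2 * t)) (gamma_t eps x0 t) = gamma_t eps x0 t.
Proof.
  pose proof (gamma_t_centered_sqr t) as Hsq; cbv zeta in Hsq.
  unfold Qfib, Ccurve; rewrite cis_2PI_frac.
  set (z := gamma_t eps x0 t) in *; set (W := cis (2 * PI * (2 * t))) in *.
  replace (RtoC (1/4 - eps ^ 2 * x0)) with (RtoC (1/2) * RtoC (1/2) - RtoC (eps ^ 2) * RtoC x0)%C
    by (rewrite <- RtoC_mult, <- RtoC_mult, <- RtoC_minus; f_equal; field).
  assert (Hhalf : (RtoC (1/2) + RtoC (1/2) = 1)%C) by (rewrite <- RtoC_plus; f_equal; field).
  transitivity ((z - RtoC (1/2)) * (z - RtoC (1/2)) - RtoC (eps ^ 2) * (W + RtoC x0)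
                + (RtoC (1/2) + RtoC (1/2)) * z)%C; [ring | ].
  rewrite Hsq, Hhalf; ring.
Qed.

Lemma continuous_gamma_t (t : R) : Rabs x0 < 1 -> continuous (gamma_t eps x0) t.
Proof.
  intros Hx0.
  assert (Hlin : forall c, continuous (fun u => c * u) t)
    by (intros c; apply continuous_Rmult_comp; [apply continuous_const | apply continuous_id]).
  unfold gamma_t.
  apply continuous_Cplus_comp; [apply continuous_const | ].
  apply continuous_Cmult_comp.
  - apply continuous_Cmult_comp; [apply continuous_const | apply continuous_cis_comp, Hlin].
  - apply continuous_Csqrt_comp; [intros u; apply Re_1_plus_scal_cis_pos, Hx0 | ].
    apply continuous_Cplus_comp; [apply continuous_const | ].
    apply continuous_Cmult_comp; [apply continuous_const | apply continuous_cis_comp].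
    apply (continuous_opp (V := R_NormedModule)), Hlin.
Qed.

Lemma gamma_t_inj (s t : R) :
  eps <> 0 -> Rabs x0 < 1 -> 0 <= s < 1 -> 0 <= t < 1 ->
  gamma_t eps x0 s = gamma_t eps x0 t -> s = t.
Proof.
  intros Heps Hx0 Hs Ht Hst.
  assert (Heps2 : RtoC (eps ^ 2) <> 0%C)
    by (intros H; injection H as H; exact (pow_nonzero eps 2 Heps H)).
  assert (Hdouble : cis (4 * PI * s) = cis (4 * PI * t)).
  { pose proof (gamma_t_centered_sqr s) as Hsq_s; pose proof (gamma_t_centered_sqr t) as Hsq_t.
    cbv zeta in Hsq_s, Hsq_t; rewrite Hst, Hsq_t in Hsq_s.
    apply Cmult_reg_l in Hsq_s; [ | exact Heps2].
    replace (4 * PI * s) with (2 * PI * (2 * s)) by ring.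
    replace (4 * PI * t) with (2 * PI * (2 * t)) by ring.
    transitivity (cis (2 * PI * (2 * s)) + RtoC x0 - RtoC x0)%C; [ring | ].
    rewrite <- Hsq_s; ring. }
  set (S := Csqrt (1 + RtoC x0 * cis (- (4 * PI * t)))).
  assert (HS : S <> 0%C).
  { intros H.
    pose proof (Re_Csqrt_pos _ (Re_1_plus_scal_cis_pos x0 (- (4 * PI * t)) Hx0)) as HRe.
    fold S in HRe; rewrite H in HRe; simpl in HRe; lra. }
  apply cis_2PI_inj; auto.
  apply (Cmult_reg_l (RtoC eps * S)).
  { apply Cmult_neq_0; [intros H; injection H; exact Heps | exact HS]. }
  transitivity (gamma_t eps x0 s - RtoC (1/2))%C.
  - unfold gamma_t; rewrite cis_opp, Hdouble, <- cis_opp; fold S; ring.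
  - rewrite Hst; unfold gamma_t; fold S; ring.
Qed.

End GammaCurve.

Theorem mainTheorem2 (eps x0 : R) :
  0 < eps -> 0 <= x0 < 1/4 -> eps^2 / (1/4 - eps^2 * x0) < 1 ->
  invariant_2curve 0 0 (Qfib eps x0) (gamma_t eps x0).
Proof.
  intros Heps Hx0 _.
  assert (Habs : Rabs x0 < 1) by (rewrite Rabs_pos_eq; lra).
  split; [split; [| split] | split; [now left | ]].
  - intros t; apply gamma_t_periodic.
  - intros t; apply continuous_gamma_t, Habs.
  - intros s t Hs Ht; apply gamma_t_inj; auto; lra.
  - intros t; replace (t + (0 + INR 0) / 2) with t by (simpl; field).
    apply Qfib_gamma_t.
Qed.
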